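(* The class of unital equivariantly supported reflexive based quantal frames satisfying the inverse law can be identified with the class of inverse quantal frames. Precisely: if $Q$ is an equivariantly supported reflexive based quantal frame (with base locale $A$, support $\varsigma$ and $\upsilon:Q\to A$) which has a multiplicative unit $e$ and satisfies the inverse law, then $Q$, as a unital involutive quantale, is an inverse quantal frame; and conversely every inverse quantal frame $Q$, regarded as a based quantal frame over $A={\downarrow}e$ with actions given by multiplication, support $\varsigma(q)=q1_Q\wedge e$ and $\upsilon(q)=q\wedge e$, is an equivariantly supported reflexive based quantal frame satisfying the inverse law.
   Context: For a locale $A$, an $A$-$A$-bimodule is a sup-lattice $M$ with actions $a\triangleright m$, $m\triangleleft a$ preserving joins in each variable, with $1_A\triangleright m=m$, $(a\wedge b)\triangleright m=a\triangleright(b\triangleright m)$, $m\triangleleft1_A=m$, $m\triangleleft(a\wedge b)=(m\triangleleft a)\triangleleft b$, $(a\triangleright m)\triangleleft b=a\triangleright(m\triangleleft b)$. An $A$-$A$-quantale is such a $Q$ with associative join-preserving multiplication and $(a\triangleright x)y=a\triangleright(xy)$, $(x\triangleleft a)y=x(a\triangleright y)$, $(xy)\triangleleft a=x(y\triangleleft a)$; involutive if there is a join-preserving $x\mapsto x^*$ with $x^{**}=x$, $(xy)^*=y^*x^*$, $(a\triangleright(x\triangleleft b))^*=b\triangleright(x^*\triangleleft a)$. $1_Q$ is the top. A support is a join-preserving $\varsigma:Q\to A$ with $\varsigma(1_Q)=1_A$, $\varsigma(x)\triangleright y\le xx^*y$, $\varsigma(x)\triangleright x=x$; equivariant if $\varsigma(a\triangleright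 x)=a\wedge\varsigma(x)$. A based quantal frame is an involutive $A$-$A$-quantale which is a frame with $(a\triangleright x)\wedge y=a\triangleright(x\wedge y)$, $(x\triangleleft a)\wedge y=(x\wedge y)\triangleleft a$; reflexive: a frame homomorphism $\upsilon:Q\to A$ with $\upsilon(a\triangleright1_Q)=a=\upsilon(1_Q\triangleleft a)$. Inverse law: $\upsilon(a)\triangleright1_Q=\bigvee_{xy^*\le a}x\wedge y$ for all $a\in Q$. An inverse quantal frame is a unital involutive quantale $Q$ (unit $e$) whose lattice is a frame, with a stable unital support, i.e. a join-preserving $\varsigma:Q\to Q$ with $\varsigma(x)\le e$, $\varsigma(x)\le xx^*$, $x\le\varsigma(x)x$ and $\varsigma(xy)=\varsigma(x\varsigma(y))$, such that $\bigvee\{s\in Q\mid ss^*\vee s^*s\le e\}=1_Q$. *)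

From Stdlib Require Import ProofIrrelevance.

Set Implicit Arguments.

Record suplat := SupLat {
  car :> Type;
  le : car -> car -> Prop;
  sup : (car -> Prop) -> car;
  le_refl : forall x, le x x;
  le_trans : forall x y z, le x y -> le y z -> le x z;
  le_anti : forall x y, le x y -> le y x -> x = y;
  sup_ub : forall (S : car -> Prop) x, S x -> le x (sup S);
  sup_least : forall (S : car -> Prop) y, (forall x, S x -> le x y) -> le (sup S) y
}.
Arguments le {s}.
Arguments sup {s}.
Arguments le_anti {s x y}.

Section Ops.
Variable L : suplat.
Definition top : L := sup (fun _ => True).
Definition meet (x y : L) : L := sup (fun z => le z x /\ le z y).
Definition join (x y : L) : L := sup (fun z => z = x \/ z = y).
Definition is_frame : Prop :=
  forall (x : L) (S : L -> Prop),
    meet x (sup S) = sup (fun y => exists s, S s /\ y = meet x s).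

Lemma meet_lb_r (x y : L) : le (meet x y) y.
Proof. apply sup_least. intros z [_ H]. exact H. Qed.
End Ops.
Arguments top {L}.
Arguments meet {L}.
Arguments join {L}.

Definition join_pres (L M : suplat) (f : L -> M) : Prop :=
  forall S : L -> Prop, f (sup S) = sup (fun y => exists x, S x /\ y = f x).

Arguments join_pres {L M}.
Definition frame_hom (L M : suplat) (f : L -> M) : Prop :=
  join_pres f /\ f top = top /\ forall x y, f (meet x y) = meet (f x) (f y).

Section Based.
Variables (A M : suplat) (lact : A -> M -> M) (ract : M -> A -> M).

Definition is_bimodule : Prop :=
  (forall a, join_pres (lact a)) /\ (forall m, join_pres (fun a => lact a m)) /\
  (forall a, join_pres (fun m => ract m a)) /\ (forall m, join_pres (ract m)) /\
  (forall m, lact top m = m) /\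
  (forall a b m, lact (meet a b) m = lact a (lact b m)) /\
  (forall m, ract m top = m) /\
  (forall a b m, ract m (meet a b) = ract (ract m a) b) /\
  (forall a b m, ract (lact a m) b = lact a (ract m b)).

Variable mul : M -> M -> M.

Definition is_AA_quantale : Prop :=
  is_bimodule /\
  (forall x y z, mul (mul x y) z = mul x (mul y z)) /\
  (forall x, join_pres (mul x)) /\ (forall y, join_pres (fun x => mul x y)) /\
  (forall a x y, mul (lact a x) y = lact a (mul x y)) /\
  (forall a x y, mul (ract x a) y = mul x (lact a y)) /\
  (forall a x y, ract (mul x y) a = mul x (ract y a)).

Variable inv : M -> M.

Definition is_involutive_AA_quantale : Prop :=
  is_AA_quantale /\ join_pres inv /\
  (forall x, inv (inv x) = x) /\
  (forall x y, inv (mul x y) = mul (inv y) (inv x)) /\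
  (forall a b x, inv (lact a (ract x b)) = lact b (ract (inv x) a)).

Definition is_support (s : M -> A) : Prop :=
  join_pres s /\ s top = top /\
  (forall x y, le (lact (s x) y) (mul (mul x (inv x)) y)) /\
  (forall x, lact (s x) x = x).

Definition is_equivariant (s : M -> A) : Prop :=
  forall a x, s (lact a x) = meet a (s x).

Definition is_based_quantal_frame : Prop :=
  is_frame A /\ is_involutive_AA_quantale /\ is_frame M /\
  (forall a x y, meet (lact a x) y = lact a (meet x y)) /\
  (forall x a y, meet (ract x a) y = ract (meet x y) a).

Arguments frame_hom {L M}.
Definition is_reflexive (u : M -> A) : Prop :=
  frame_hom u /\ forall a, u (lact a top) = a /\ u (ract top a) = a.

Definition inverse_law (u : M -> A) : Prop :=
  forall a : M, lact (u a) top =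
    sup (fun z => exists x y, le (mul x (inv y)) a /\ z = meet x y).
End Based.

Section IQF.
Variables (Q : suplat) (mul : Q -> Q -> Q) (inv : Q -> Q) (e : Q).

Definition is_unit : Prop := forall x, mul e x = x /\ mul x e = x.

Definition is_unital_involutive_quantale : Prop :=
  (forall x y z, mul (mul x y) z = mul x (mul y z)) /\
  (forall x, join_pres (mul x)) /\ (forall y, join_pres (fun x => mul x y)) /\
  is_unit /\
  join_pres inv /\ (forall x, inv (inv x) = x) /\
  (forall x y, inv (mul x y) = mul (inv y) (inv x)).

Definition is_stable_unital_support (s : Q -> Q) : Prop :=
  join_pres s /\
  (forall x, le (s x) e) /\ (forall x, le (s x) (mul x (inv x))) /\
  (forall x, le x (mul (s x) x)) /\
  (forall x y, s (mul x y) = s (mul x (s y))).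

Definition is_inverse_quantal_frame : Prop :=
  is_unital_involutive_quantale /\ is_frame Q /\
  (exists s, is_stable_unital_support s) /\
  sup (fun s => le (join (mul s (inv s)) (mul (inv s) s)) e) = top.
End IQF.

Section Down.
Variables (Q : suplat) (e : Q).
Definition down_car := {x : Q | le x e}.
Definition down_le (x y : down_car) : Prop := le (proj1_sig x) (proj1_sig y).
Definition down_img (S : down_car -> Prop) : Q -> Prop :=
  fun x => exists a, S a /\ x = proj1_sig a.
Lemma down_sup_proof (S : down_car -> Prop) : le (sup (down_img S)) e.
Proof. apply sup_least. intros x [a [_ ->]]. exact (proj2_sig a). Qed.
Definition down_sup (S : down_car -> Prop) : down_car :=
  exist _ (sup (down_img S)) (down_sup_proof S).

Lemma down_le_refl x : down_le x x. Proof. apply le_refl. Qed.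
Lemma down_le_trans x y z : down_le x y -> down_le y z -> down_le x z.
Proof. apply le_trans. Qed.
Lemma down_le_anti x y : down_le x y -> down_le y x -> x = y.
Proof.
  destruct x as [x hx], y as [y hy]; unfold down_le; simpl; intros h1 h2.
  pose proof (le_anti h1 h2) as E; subst y. f_equal. apply proof_irrelevance.
Qed.
Lemma down_sup_ub S x : S x -> down_le x (down_sup S).
Proof. intro h. apply sup_ub. exists x. split; auto. Qed.
Lemma down_sup_least S y : (forall x, S x -> down_le x y) -> down_le (down_sup S) y.
Proof. intro h. apply sup_least. intros x [a [Ha ->]]. apply h, Ha. Qed.

Definition downset : suplat :=
  @SupLat down_car down_le down_sup down_le_refl down_le_trans down_le_anti down_sup_ub down_sup_least.

Definition meet_e (q : Q) : downset := exist _ (meet q e) (@meet_lb_r Q q e).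
End Down.

Arguments is_bimodule {A M}.
Arguments is_AA_quantale {A M}.
Arguments is_involutive_AA_quantale {A M}.
Arguments is_support {A M}.
Arguments is_equivariant {A M}.
Arguments is_based_quantal_frame {A M}.
Arguments is_reflexive {A M}.
Arguments inverse_law {A M}.
Arguments is_unit {Q}.
Arguments is_unital_involutive_quantale {Q}.
Arguments is_stable_unital_support {Q}.
Arguments is_inverse_quantal_frame {Q}.
Arguments downset {Q}.
Arguments meet_e {Q}.

From Stdlib Require Import Setoid.

Set Implicit Arguments.
Unset Strict Implicit.

(** From a based quantal frame to an inverse quantal frame: equivariance makes
    [s x] the least [a] with [a ▷ x = x], so [x ↦ s x ▷ e] is a stable unital
    support.  The inverse law at [e] forces [u e ▷ -] to be the identity, so
    [1 = ⋁ {x ∧ y | x y* ≤ e}] is a join of elements [w] with [w w* ≤ e]; meeting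
    these with their involutes yields a cover by partial units.

    Conversely, in an inverse quantal frame the elements below [e] are central
    idempotents: [b x = b1 ∧ x], [x b = x ∧ 1b] and [a b = a ∧ b].  Hence
    multiplication by [↓e] satisfies the based-frame axioms, [q1 ∧ e] is the
    support [ς q], and the inverse law follows from the cover by partial units. *)

Section Lattice.
Context {L : suplat}.
Implicit Types x y z : L.

Lemma le_top x : le x top.
Proof. apply sup_ub. exact I. Qed.

Lemma meet_lb_l x y : le (meet x y) x.
Proof. apply sup_least. intros z [H _]. exact H. Qed.

Lemma meet_glb x y z : le z x -> le z y -> le z (meet x y).
Proof. intros. apply sup_ub. auto. Qed.

Lemma meet_comm x y : meet x y = meet y x.
Proof. apply le_anti; apply meet_glb; (apply meet_lb_l || apply meet_lb_r). Qed.

Lemma meet_eq_l x y : le x y -> meet x y = x.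
Proof. intro h. apply le_anti; [apply meet_lb_l | apply meet_glb; auto; apply le_refl]. Qed.

Lemma meet_eq_r x y : le y x -> meet x y = y.
Proof. intro h. rewrite meet_comm. apply meet_eq_l, h. Qed.

Lemma meet_top_l x : meet top x = x.
Proof. apply meet_eq_r, le_top. Qed.

Lemma meet_idem x : meet x x = x.
Proof. apply meet_eq_l, le_refl. Qed.

Lemma meet_assoc x y z : meet (meet x y) z = meet x (meet y z).
Proof.
  apply le_anti; repeat apply meet_glb.
  - eapply le_trans; apply meet_lb_l.
  - eapply le_trans; [apply meet_lb_l | apply meet_lb_r].
  - apply meet_lb_r.
  - apply meet_lb_l.
  - eapply le_trans; [apply meet_lb_r | apply meet_lb_l].
  - eapply le_trans; apply meet_lb_r.
Qed.

Lemma meet_meet_r x y z : meet (meet x y) z = meet (meet x z) (meet y z).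
Proof.
  apply le_anti; repeat apply meet_glb; try apply meet_lb_r.
  - eapply le_trans; apply meet_lb_l.
  - eapply le_trans; [apply meet_lb_l | apply meet_lb_r].
  - eapply le_trans; apply meet_lb_l.
  - eapply le_trans; [apply meet_lb_r | apply meet_lb_l].
  - eapply le_trans; [apply meet_lb_l | apply meet_lb_r].
Qed.

Lemma join_ub_l x y : le x (join x y).
Proof. apply sup_ub. auto. Qed.

Lemma join_ub_r x y : le y (join x y).
Proof. apply sup_ub. auto. Qed.

Lemma join_least x y z : le x z -> le y z -> le (join x y) z.
Proof. intros. apply sup_least. intros w [-> | ->]; auto. Qed.

Lemma sup_mono (S T : L -> Prop) :
  (forall x, S x -> exists y, T y /\ le x y) -> le (sup S) (sup T).
Proof.
  intro h. apply sup_least. intros x hx. destruct (h x hx) as [y [hy hxy]].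
  eapply le_trans; [exact hxy | apply sup_ub, hy].
Qed.

Lemma sup_ext (S T : L -> Prop) : (forall x, S x <-> T x) -> sup S = sup T.
Proof.
  intro h. apply le_anti; apply sup_mono; intros x hx; exists x;
    split; try apply le_refl; apply h; exact hx.
Qed.

Lemma frame_r (F : is_frame L) (S : L -> Prop) x :
  meet (sup S) x = sup (fun y => exists s, S s /\ y = meet s x).
Proof.
  rewrite meet_comm, F. apply sup_ext. intro y.
  split; intros [s [hs ->]]; exists s; split; auto; apply meet_comm.
Qed.
End Lattice.

Lemma join_pres_mono (L M : suplat) (f : L -> M) :
  join_pres f -> forall x y, le x y -> le (f x) (f y).
Proof.
  intros h x y hxy.
  assert (join_xy : join x y = y).
  { apply le_anti; [apply join_least; auto; apply le_refl | apply join_ub_r]. }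
  rewrite <- join_xy. unfold join. rewrite h. apply sup_ub. exists x. auto.
Qed.

Section DownSet.
Context {Q : suplat} (e : Q).

Lemma down_eq (a b : downset e) : proj1_sig a = proj1_sig b -> a = b.
Proof. intro h. apply (@down_le_anti Q e); unfold down_le; rewrite h; apply le_refl. Qed.

Lemma down_top_val : proj1_sig (@top (downset e)) = e.
Proof.
  apply le_anti.
  - apply sup_least. intros x [a [_ ->]]. exact (proj2_sig a).
  - apply sup_ub. exists (exist (fun x => le x e) e (le_refl Q e)). split; auto.
Qed.

Lemma down_meet_val (a b : downset e) :
  proj1_sig (meet a b) = meet (proj1_sig a) (proj1_sig b).
Proof.
  apply le_anti.
  - apply sup_least. intros x [c [[h1 h2] ->]]. apply meet_glb; auto.
  - assert (h : le (meet (proj1_sig a) (proj1_sig b)) e).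
    { eapply le_trans; [apply meet_lb_l | exact (proj2_sig a)]. }
    apply sup_ub. exists (exist (fun x => le x e) _ h).
    split; auto. split; [apply meet_lb_l | apply meet_lb_r].
Qed.

Lemma join_pres_down_val (M : suplat) (f : Q -> M) :
  join_pres f -> join_pres (fun a : downset e => f (proj1_sig a)).
Proof.
  intros hf S. simpl. rewrite hf. apply sup_ext. intro y. split.
  - intros [z [[a [ha ->]] ->]]. exists a. auto.
  - intros [a [ha ->]]. exists (proj1_sig a). split; [exists a; auto | reflexivity].
Qed.

Lemma join_pres_to_down (M : suplat) (f : M -> downset e) :
  join_pres (fun x => proj1_sig (f x)) -> join_pres f.
Proof.
  intros hf S. apply down_eq. rewrite hf. simpl. apply sup_ext. intro y. split.
  - intros [x [hx ->]]. exists (f x). split; [exists x; auto | reflexivity].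
  - intros [c [[x [hx ->]] ->]]. eauto.
Qed.

Lemma downset_is_frame : is_frame Q -> is_frame (downset e).
Proof.
  intros F a S. apply down_eq. rewrite down_meet_val. simpl. rewrite F.
  apply sup_ext. intro y. split.
  - intros [z [[b [hb ->]] ->]]. exists (meet a b). split; [eauto | symmetry; apply down_meet_val].
  - intros [c [[b [hb ->]] ->]]. exists (proj1_sig b).
    split; [exists b; auto | apply down_meet_val].
Qed.
End DownSet.

Section InvolutiveQuantalFrame.
Variables (Q : suplat) (mul : Q -> Q -> Q) (inv : Q -> Q) (e : Q).
Hypothesis mul_assoc : forall x y z, mul (mul x y) z = mul x (mul y z).
Hypothesis mul_join_pres_r : forall x, join_pres (mul x).
Hypothesis mul_join_pres_l : forall y, join_pres (fun x => mul x y).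
Hypothesis inv_join_pres : join_pres inv.
Hypothesis inv_invol : forall x, inv (inv x) = x.
Hypothesis inv_mul : forall x y, inv (mul x y) = mul (inv y) (inv x).
Hypothesis e_unit : is_unit mul e.
Hypothesis Q_frame : is_frame Q.

Lemma mul_mono x y x' y' : le x x' -> le y y' -> le (mul x y) (mul x' y').
Proof.
  intros. eapply le_trans.
  - apply (join_pres_mono (mul_join_pres_l y)); eauto.
  - apply (join_pres_mono (mul_join_pres_r x')); auto.
Qed.

Lemma inv_mono x y : le x y -> le (inv x) (inv y).
Proof. apply (join_pres_mono inv_join_pres). Qed.

Lemma mul_e_l x : mul e x = x.
Proof. apply e_unit. Qed.

Lemma mul_e_r x : mul x e = x.
Proof. apply e_unit. Qed.

Lemma inv_e : inv e = e.
Proof.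
  rewrite <- (mul_e_r (inv e)) at 1. rewrite <- (inv_invol e) at 2.
  rewrite <- inv_mul, mul_e_r. apply inv_invol.
Qed.

Lemma inv_top : inv top = top.
Proof. apply le_anti; [apply le_top|]. rewrite <- (inv_invol top) at 1. apply inv_mono, le_top. Qed.

Lemma inv_meet x y : inv (meet x y) = meet (inv x) (inv y).
Proof.
  apply le_anti.
  - apply meet_glb; apply inv_mono; [apply meet_lb_l | apply meet_lb_r].
  - rewrite <- (inv_invol (meet (inv x) (inv y))). apply inv_mono, meet_glb.
    + rewrite <- (inv_invol x) at 2. apply inv_mono, meet_lb_l.
    + rewrite <- (inv_invol y) at 2. apply inv_mono, meet_lb_r.
Qed.

(* Each [inv z] with [z z* ≤ e] is covered by the partial units [inv z ∧ w]. *)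
Lemma partial_units_join_top :
  sup (fun w => le (mul w (inv w)) e) = top ->
  sup (fun s => le (join (mul s (inv s)) (mul (inv s) s)) e) = top.
Proof.
  intro cover. apply le_anti; [apply le_top|].
  rewrite <- inv_top, <- cover, inv_join_pres. apply sup_least.
  intros y [z [hz ->]].
  rewrite <- (meet_eq_l (le_top (inv z))), <- cover, Q_frame.
  apply sup_least. intros t [w [hw ->]]. apply sup_ub, join_least.
  - eapply le_trans; [|exact hw].
    apply mul_mono; [apply meet_lb_r | apply inv_mono, meet_lb_r].
  - eapply le_trans; [|exact hz]. apply mul_mono; [|apply meet_lb_l].
    eapply le_trans; [apply inv_mono, meet_lb_l | rewrite inv_invol; apply le_refl].
Qed.

Section BasedToInverse.
Variables (A : suplat) (lact : A -> Q -> Q) (ract : Q -> A -> Q) (s u : Q -> A).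
Hypothesis lact_join_pres_r : forall a, join_pres (lact a).
Hypothesis lact_join_pres_l : forall m, join_pres (fun a => lact a m).
Hypothesis lact_top : forall m, lact top m = m.
Hypothesis mul_lact : forall a x y, mul (lact a x) y = lact a (mul x y).
Hypothesis mul_ract : forall a x y, mul (ract x a) y = mul x (lact a y).
Hypothesis meet_lact : forall a x y, meet (lact a x) y = lact a (meet x y).
Hypothesis s_join_pres : join_pres s.
Hypothesis lact_s_le : forall x y, le (lact (s x) y) (mul (mul x (inv x)) y).
Hypothesis lact_s : forall x, lact (s x) x = x.
Hypothesis s_equivariant : is_equivariant lact s.
Hypothesis u_inverse_law : inverse_law lact mul inv u.

Lemma lact_mono a b x y : le a b -> le x y -> le (lact a x) (lact b y).
Proof.
  intros. eapply le_trans.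
  - apply (join_pres_mono (lact_join_pres_l x)); eauto.
  - apply (join_pres_mono (lact_join_pres_r b)); auto.
Qed.

Lemma lact_fixed_of_le (a : A) w : le w (lact a top) -> lact a w = w.
Proof.
  intro h. rewrite <- (meet_eq_r h) at 2. rewrite meet_lact, meet_top_l. reflexivity.
Qed.

Lemma support_le_of_fixed (a : A) x : lact a x = x -> le (s x) a.
Proof. intro h. rewrite <- h, s_equivariant. apply meet_lb_l. Qed.

Lemma support_mul_le x y : le (s (mul x y)) (s x).
Proof.
  eapply le_trans.
  - apply (join_pres_mono s_join_pres), mul_mono; [apply le_refl | apply le_top].
  - apply support_le_of_fixed. rewrite <- mul_lact, lact_s. reflexivity.
Qed.

Lemma mul_lact_e_r a x : mul x (lact a e) = ract x a.
Proof. rewrite <- mul_ract. apply mul_e_r. Qed.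

Definition unit_support x := lact (s x) e.

Lemma unit_support_stable x y :
  unit_support (mul x y) = unit_support (mul x (unit_support y)).
Proof.
  unfold unit_support. f_equal. rewrite mul_lact_e_r. apply le_anti.
  - rewrite <- (lact_s y) at 1. rewrite <- mul_ract. apply support_mul_le.
  - (* [x ◁ s y ≤ x y y* = s(xy) ▷ x y y* ≤ s(xy) ▷ 1], so [s(xy)] fixes it. *)
    apply support_le_of_fixed, lact_fixed_of_le.
    rewrite <- mul_lact_e_r. eapply le_trans.
    { apply mul_mono; [apply le_refl | apply lact_s_le]. }
    rewrite mul_e_r, <- mul_assoc, <- (lact_s (mul x y)) at 1. rewrite mul_lact.
    apply lact_mono; [apply le_refl | apply le_top].
Qed.

Lemma unit_support_is_stable : is_stable_unital_support mul inv e unit_support.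
Proof.
  unfold unit_support. split; [|split; [|split; [|split]]].
  - intro S. rewrite s_join_pres, (lact_join_pres_l e). apply sup_ext. intro y. split.
    + intros [a [[x [hx ->]] ->]]. eauto.
    + intros [x [hx ->]]. exists (s x). eauto.
  - intro x. rewrite <- (lact_top e) at 2. apply lact_mono; [apply le_top | apply le_refl].
  - intro x. eapply le_trans; [apply lact_s_le | rewrite mul_e_r; apply le_refl].
  - intro x. rewrite mul_lact, mul_e_l, lact_s. apply le_refl.
  - apply unit_support_stable.
Qed.

Lemma lact_unit_id x : lact (u e) x = x.
Proof.
  assert (e_le : le e (lact (u e) top)).
  { rewrite u_inverse_law. apply sup_ub. exists e, e.
    rewrite inv_e, mul_e_l, meet_idem. split; [apply le_refl | reflexivity]. }
  rewrite <- (mul_e_l x), <- mul_lact, (lact_fixed_of_le e_le). reflexivity.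
Qed.

Lemma right_partial_units_join_top : sup (fun w => le (mul w (inv w)) e) = top.
Proof.
  apply le_anti; [apply le_top|].
  rewrite <- (lact_unit_id top), u_inverse_law. apply sup_mono.
  intros z [x [y [hxy ->]]]. exists (meet x y). split; [|apply le_refl].
  eapply le_trans; [|exact hxy].
  apply mul_mono; [apply meet_lb_l | apply inv_mono, meet_lb_r].
Qed.

Lemma based_inverse_quantal_frame : is_inverse_quantal_frame mul inv e.
Proof.
  split; [|split; [|split]].
  - repeat split; auto; apply e_unit.
  - exact Q_frame.
  - exists unit_support. exact unit_support_is_stable.
  - apply partial_units_join_top, right_partial_units_join_top.
Qed.
End BasedToInverse.

Section InverseToBased.
Variable sg : Q -> Q.
Hypothesis sg_join_pres : join_pres sg.
Hypothesis sg_le_e : forall x, le (sg x) e.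
Hypothesis sg_le_mul_inv : forall x, le (sg x) (mul x (inv x)).
Hypothesis le_mul_sg : forall x, le x (mul (sg x) x).
Hypothesis sg_stable : forall x y, sg (mul x y) = sg (mul x (sg y)).
Hypothesis partial_units_cover :
  sup (fun s => le (join (mul s (inv s)) (mul (inv s) s)) e) = top.

Lemma sg_mono x y : le x y -> le (sg x) (sg y).
Proof. apply (join_pres_mono sg_join_pres). Qed.

Lemma inv_le_e b : le b e -> le (inv b) e.
Proof. intro h. rewrite <- inv_e. apply inv_mono, h. Qed.

Lemma mul_sg_l x : mul (sg x) x = x.
Proof.
  apply le_anti; [|apply le_mul_sg].
  rewrite <- (mul_e_l x) at 3. apply mul_mono; [apply sg_le_e | apply le_refl].
Qed.

Lemma sg_id_le_e b : le b e -> sg b = b.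
Proof.
  intro h. apply le_anti.
  - eapply le_trans; [apply sg_le_mul_inv|].
    rewrite <- (mul_e_r b) at 3. apply mul_mono; [apply le_refl | apply inv_le_e, h].
  - rewrite <- (mul_sg_l b) at 1. rewrite <- (mul_e_r (sg b)) at 2.
    apply mul_mono; [apply le_refl | exact h].
Qed.

Lemma mul_inv_id_le_e b : le b e -> mul b (inv b) = b.
Proof.
  intro h. apply le_anti.
  - rewrite <- (mul_e_r b) at 3. apply mul_mono; [apply le_refl | apply inv_le_e, h].
  - rewrite <- (sg_id_le_e h) at 1. apply sg_le_mul_inv.
Qed.

Lemma inv_id_le_e b : le b e -> inv b = b.
Proof.
  intro h. rewrite <- (mul_inv_id_le_e h) at 1. rewrite inv_mul, inv_invol.
  apply mul_inv_id_le_e, h.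
Qed.

Lemma mul_meet_le_e a b : le a e -> le b e -> mul a b = meet a b.
Proof.
  intros ha hb. apply le_anti.
  - apply meet_glb.
    + rewrite <- (mul_e_r a) at 2. apply mul_mono; [apply le_refl | exact hb].
    + rewrite <- (mul_e_l b) at 2. apply mul_mono; [exact ha | apply le_refl].
  - assert (hab : le (meet a b) e) by (eapply le_trans; [apply meet_lb_l | exact ha]).
    rewrite <- (mul_inv_id_le_e hab) at 1. rewrite (inv_id_le_e hab).
    apply mul_mono; [apply meet_lb_l | apply meet_lb_r].
Qed.

Lemma sg_top : sg top = e.
Proof.
  apply le_anti; [apply sg_le_e|].
  rewrite <- (sg_id_le_e (le_refl Q e)) at 1. apply sg_mono, le_top.
Qed.

Lemma sg_mul_top x : sg (mul x top) = sg x.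
Proof. rewrite sg_stable, sg_top, mul_e_r. reflexivity. Qed.

Lemma meet_mul_top_e x : meet (mul x top) e = sg x.
Proof.
  apply le_anti.
  - rewrite <- (sg_id_le_e (meet_lb_r _ (mul x top) e)), <- (sg_mul_top x).
    apply sg_mono, meet_lb_l.
  - apply meet_glb; [|apply sg_le_e]. eapply le_trans; [apply sg_le_mul_inv|].
    apply mul_mono; [apply le_refl | apply le_top].
Qed.

Lemma mul_le_e_l b x : le b e -> mul b x = meet (mul b top) x.
Proof.
  intro h. apply le_anti.
  - apply meet_glb; [apply mul_mono; [apply le_refl | apply le_top]|].
    rewrite <- (mul_e_l x) at 2. apply mul_mono; [exact h | apply le_refl].
  - rewrite <- (mul_sg_l (meet (mul b top) x)) at 1.
    apply mul_mono; [|apply meet_lb_r].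
    eapply le_trans; [apply sg_mono, meet_lb_l|].
    rewrite sg_mul_top, (sg_id_le_e h). apply le_refl.
Qed.

Lemma mul_le_e_r b x : le b e -> mul x b = meet x (mul top b).
Proof.
  intro h.
  rewrite <- (inv_invol (mul x b)), inv_mul, (inv_id_le_e h), (mul_le_e_l _ h), inv_meet,
    inv_invol, inv_mul, inv_top, (inv_id_le_e h).
  apply meet_comm.
Qed.

Definition down_lact (a : downset e) (x : Q) := mul (proj1_sig a) x.
Definition down_ract (x : Q) (a : downset e) := mul x (proj1_sig a).
Definition down_support (q : Q) := meet_e e (mul q top).

Lemma down_support_val q : proj1_sig (down_support q) = sg q.
Proof. apply meet_mul_top_e. Qed.

Lemma down_bimodule : is_bimodule down_lact down_ract.
Proof.
  assert (below_e : forall a : downset e, le (proj1_sig a) e) by exact (@proj2_sig _ _).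
  unfold down_lact, down_ract.
  split; [|split; [|split; [|split; [|split; [|split; [|split; [|split]]]]]]].
  - intro a. apply mul_join_pres_r.
  - intro m. exact (join_pres_down_val (mul_join_pres_l m)).
  - intro a. apply mul_join_pres_l.
  - intro m. exact (join_pres_down_val (mul_join_pres_r m)).
  - intro m. rewrite down_top_val. apply mul_e_l.
  - intros a b m. rewrite down_meet_val, <- (mul_meet_le_e (below_e a) (below_e b)).
    apply mul_assoc.
  - intro m. rewrite down_top_val. apply mul_e_r.
  - intros a b m. rewrite down_meet_val, <- (mul_meet_le_e (below_e a) (below_e b)).
    symmetry. apply mul_assoc.
  - intros a b m. apply mul_assoc.
Qed.

Lemma down_based_quantal_frame : is_based_quantal_frame down_lact down_ract mul inv.
Proof.
  assert (below_e : forall a : downset e, le (proj1_sig a) e) by exact (@proj2_sig _ _).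
  split; [|split; [|split; [|split]]].
  - apply downset_is_frame, Q_frame.
  - split; [split; [apply down_bimodule|] | split; [|split; [|split]]].
    + split; [exact mul_assoc|]. split; [exact mul_join_pres_r|].
      split; [exact mul_join_pres_l|].
      split; [|split]; intros; apply mul_assoc.
    + exact inv_join_pres.
    + exact inv_invol.
    + exact inv_mul.
    + intros a b x. unfold down_lact, down_ract.
      rewrite !inv_mul, (inv_id_le_e (below_e a)), (inv_id_le_e (below_e b)).
      apply mul_assoc.
  - exact Q_frame.
  - intros a x y. unfold down_lact. rewrite (mul_le_e_l x (below_e a)), (mul_le_e_l (meet x y) (below_e a)).
    apply meet_assoc.
  - intros x a y. unfold down_ract. rewrite (mul_le_e_r x (below_e a)), (mul_le_e_r (meet x y) (below_e a)), !meet_assoc.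
    f_equal. apply meet_comm.
Qed.

Lemma down_support_is_support : is_support down_lact mul inv down_support.
Proof.
  unfold down_lact. split; [|split; [|split]].
  - apply join_pres_to_down. intro S. cbv beta.
    rewrite down_support_val, sg_join_pres. apply sup_ext. intro y.
    split; intros [x [hx ->]]; exists x; rewrite down_support_val; auto.
  - apply down_eq. rewrite down_support_val, down_top_val. apply sg_top.
  - intros x y. rewrite down_support_val.
    apply mul_mono; [apply sg_le_mul_inv | apply le_refl].
  - intro x. rewrite down_support_val. apply mul_sg_l.
Qed.

Lemma down_support_equivariant : is_equivariant down_lact down_support.
Proof.
  intros a x. apply down_eq. unfold down_lact.
  rewrite down_meet_val, !down_support_val, sg_stable,
    (mul_meet_le_e (proj2_sig a) (sg_le_e x)).
  apply sg_id_le_e. eapply le_trans; [apply meet_lb_r | apply sg_le_e].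
Qed.

Lemma meet_e_reflexive : is_reflexive down_lact down_ract (meet_e e).
Proof.
  unfold down_lact, down_ract. split; [split; [|split]|].
  - apply join_pres_to_down. intro S. apply frame_r, Q_frame.
  - apply down_eq. rewrite down_top_val. apply meet_top_l.
  - intros x y. apply down_eq. rewrite down_meet_val. apply meet_meet_r.
  - intro a. split; apply down_eq; simpl.
    + rewrite meet_mul_top_e. apply sg_id_le_e, (proj2_sig a).
    + rewrite meet_comm, <- (mul_le_e_r _ (proj2_sig a)). apply mul_e_l.
Qed.

(* [≤]: [(a ∧ e) 1] is the join of the [x := (a ∧ e) p], [p] a partial unit, and
   [x x* ≤ a]; [≥]: [x ∧ y ≤ ς(x ∧ y) 1] and [ς(x ∧ y) ≤ x y*]. *)
Lemma meet_e_inverse_law : inverse_law down_lact mul inv (meet_e e).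
Proof.
  intro a. unfold down_lact. simpl. apply le_anti.
  - assert (hae : le (meet a e) e) by apply meet_lb_r.
    rewrite <- partial_units_cover, mul_join_pres_r. apply sup_least.
    intros t [p [hp ->]]. apply sup_ub.
    exists (mul (meet a e) p), (mul (meet a e) p). rewrite meet_idem.
    split; [|reflexivity].
    rewrite inv_mul, (inv_id_le_e hae), !mul_assoc, <- (mul_assoc p).
    eapply le_trans.
    { apply mul_mono; [apply le_refl|]. apply mul_mono; [|apply le_refl].
      eapply le_trans; [apply join_ub_l | exact hp]. }
    rewrite mul_e_l, (mul_meet_le_e hae hae), meet_idem. apply meet_lb_l.
  - apply sup_least. intros z [x [y [hxy ->]]].
    rewrite <- (mul_sg_l (meet x y)) at 1. apply mul_mono; [|apply le_top].
    apply meet_glb; [|apply sg_le_e].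
    eapply le_trans; [apply sg_le_mul_inv|]. eapply le_trans; [|exact hxy].
    apply mul_mono; [apply meet_lb_l | apply inv_mono, meet_lb_r].
Qed.
End InverseToBased.
End InvolutiveQuantalFrame.

Lemma inverse_quantal_frame_of_based (A Q : suplat) (lact : A -> Q -> Q)
    (ract : Q -> A -> Q) (mul : Q -> Q -> Q) (inv : Q -> Q) (s u : Q -> A) (e : Q) :
  is_based_quantal_frame lact ract mul inv ->
  is_support lact mul inv s -> is_equivariant lact s ->
  is_unit mul e -> inverse_law lact mul inv u ->
  is_inverse_quantal_frame mul inv e.
Proof.
  intros [_ [[[[Hla [Hla' [_ [_ [Hl1 _]]]]] [Hass [Hjx [Hjy [Hmla [Hmra _]]]]]]
            [Hinvjp [Hii [Himul _]]]] [HfQ [Hml _]]]]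
         [Hsjp [_ [Hsle Hsx]]] Heq Hu Hil.
  exact (based_inverse_quantal_frame Hass Hjx Hjy Hinvjp Hii Himul Hu HfQ
           Hla Hla' Hl1 Hmla Hmra Hml Hsjp Hsle Hsx Heq Hil).
Qed.

Arguments down_lact {Q} mul e a x.
Arguments down_ract {Q} mul e x a.

Lemma inverse_quantal_frame_down_based (Q : suplat) (mul : Q -> Q -> Q) (inv : Q -> Q) (e : Q) :
  is_inverse_quantal_frame mul inv e ->
  is_based_quantal_frame (down_lact mul e) (down_ract mul e) mul inv /\
  is_support (down_lact mul e) mul inv (down_support mul e) /\
  is_equivariant (down_lact mul e) (down_support mul e) /\
  is_reflexive (down_lact mul e) (down_ract mul e) (meet_e e) /\
  inverse_law (down_lact mul e) mul inv (meet_e e).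
Proof.
  intros [[Hass [Hjx [Hjy [Hu [Hinvjp [Hii Himul]]]]]]
          [HfQ [[sg [Hsgjp [Hsge [Hsgxx [Hsgx Hstab]]]]] Hcov]]].
  split; [|split; [|split; [|split]]].
  - exact (down_based_quantal_frame Hass Hjx Hjy Hinvjp Hii Himul Hu HfQ
             Hsgjp Hsge Hsgxx Hsgx Hstab).
  - exact (down_support_is_support Hjx Hjy Hinvjp Hii Himul Hu Hsgjp Hsge Hsgxx Hsgx Hstab).
  - exact (down_support_equivariant Hjx Hjy Hinvjp Hii Himul Hu Hsgjp Hsge Hsgxx Hsgx Hstab).
  - exact (meet_e_reflexive Hjx Hjy Hinvjp Hii Himul Hu HfQ Hsgjp Hsge Hsgxx Hsgx Hstab).
  - exact (meet_e_inverse_law Hass Hjx Hjy Hinvjp Hii Himul Hu Hsge Hsgxx Hsgx Hcov).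
Qed.

Theorem theorem5p10 :
  (* unital equivariantly supported reflexive based quantal frames with the
     inverse law are inverse quantal frames *)
  (forall (A Q : suplat) (lact : A -> Q -> Q) (ract : Q -> A -> Q)
     (mul : Q -> Q -> Q) (inv : Q -> Q) (s : Q -> A) (u : Q -> A) (e : Q),
     is_based_quantal_frame lact ract mul inv ->
     is_support lact mul inv s -> is_equivariant lact s ->
     is_reflexive lact ract u ->
     is_unit mul e ->
     inverse_law lact mul inv u ->
     is_inverse_quantal_frame mul inv e) /\
  (* conversely, every inverse quantal frame is such, over A = ↓e *)
  (forall (Q : suplat) (mul : Q -> Q -> Q) (inv : Q -> Q) (e : Q),
     is_inverse_quantal_frame mul inv e ->
     let A := downset e in
     let lact := fun (a : A) (x : Q) => mul (proj1_sig a) x in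
     let ract := fun (x : Q) (a : A) => mul x (proj1_sig a) in
     let s := fun q : Q => meet_e e (mul q top) in
     let u := fun q : Q => meet_e e q in
     is_based_quantal_frame lact ract mul inv /\
     is_support lact mul inv s /\ is_equivariant lact s /\
     is_reflexive lact ract u /\
     inverse_law lact mul inv u).
Proof.
  split.
  - intros A Q lact ract mul inv s u e HQ Hs Heq _ Hu Hil.
    exact (inverse_quantal_frame_of_based HQ Hs Heq Hu Hil).
  - intros Q mul inv e HQ. exact (inverse_quantal_frame_down_based HQ).
Qed.
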